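(* Let $0<\delta<1$, let $X\subset\mathbb{R}^d$ be finite and $\delta$-separated, and let $K\ge1$. Then $X$ can be partitioned as $X=Y\sqcup Z$, with $Z=Z_1\sqcup\cdots\sqcup Z_N$, such that: (i) $\displaystyle\sup_{r\ge\delta,\ x\in\mathbb{R}^d}\frac{\#(B(x,r)\cap Y)}{r/\delta}\le K$; (ii) each $Z_i$ is contained in a ball of radius $r_i\gtrsim\delta K^{1/d}$, and each $Z_i$ has a subset $Z_i'$ with $\#Z_i'\sim r_i/\delta$ and $$\sup_{r\ge\delta,\ x\in\mathbb{R}^d}\frac{\#(B(x,r)\cap Z_i')}{r/\delta}\lessapprox 1.$$
   Context: $A\lesssim B$ means $A\le CB$ for a constant $C$ (allowed to depend on the dimension $d$); $A\sim B$ means $A\lesssim B$ and $B\lesssim A$; $A\lessapprox B$ means $A\lesssim|\log\delta|^{C'}B$ for an absolute constant $C'$. *)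

From mathcomp Require Import all_boot all_order all_algebra.
From mathcomp Require Import all_classical all_reals all_analysis.
Set Implicit Arguments. Unset Strict Implicit. Unset Printing Implicit Defensive.
Import Order.TTheory GRing.Theory Num.Theory.
Local Open Scope ring_scope.

Definition eucl_dist (R : realType) (d : nat) (x y : 'rV[R]_d) : R :=
  Num.sqrt (\sum_(i < d) (x ord0 i - y ord0 i) ^+ 2).

Definition nball (R : realType) (d : nat) (x : 'rV[R]_d) (r : R)
  (S : seq 'rV[R]_d) : nat :=
  count (fun y => eucl_dist x y <= r) S.

Definition delta_separated (R : realType) (d : nat) (delta : R)
  (X : seq 'rV[R]_d) : Prop :=
  uniq X /\ forall x y, x \in X -> y \in X -> x != y -> delta <= eucl_dist x y.

Definition ball_bound (R : realType) (d : nat) (delta M : R)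
  (S : seq 'rV[R]_d) : Prop :=
  forall (r : R) (x : 'rV[R]_d), delta <= r ->
    (nball x r S)%:R <= M * (r / delta).

(* While some ball B(x, r), r >= delta, holds more than K r / delta points of
   the remaining set, remove the points of a ball whose density (count times
   delta / r) is at least half the supremum M of all densities; what is left
   at the end is K-sparse.  In a removed ball, a greedy pass keeps a point when
   the kept set stays 2-sparse.  A rejected point lies in a ball of radius s
   already holding s / delta kept points, so a Vitali covering argument and the
   density bound M give #rejected <= 3 M #kept, whence #kept >= r / (8 delta).
   The radius is large because delta-separated points in a ball of radius r
   number at most (7 d r / delta)^d (count grid cells), while the ball holds
   more than K r / delta >= K of them. *)

From mathcomp Require Import all_boot all_order all_algebra.
From mathcomp Require Import all_classical all_reals all_analysis.
From mathcomp Require Import ring lra zify.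
Set Implicit Arguments. Unset Strict Implicit. Unset Printing Implicit Defensive.
Import Order.TTheory GRing.Theory Num.Theory.
Local Open Scope ring_scope.

Lemma exists_max_seq (R : realType) (T : eqType) (f : T -> R) (s : seq T) :
  s != [::] -> exists2 x0, x0 \in s & forall x, x \in s -> f x <= f x0.
Proof.
elim: s => [|a s IHs] // _; have [-> | s_nil] := eqVneq s [::].
  by exists a => [|x]; rewrite ?mem_seq1 // => /eqP ->.
have [b bs b_max] := IHs s_nil; have [ab | ba] := leP (f a) (f b).
  by exists b => [|x]; rewrite inE ?bs ?orbT // => /orP[/eqP -> | /b_max].
exists a => [|x]; rewrite inE ?eqxx // => /orP[/eqP -> // | /b_max].
by move=> /le_trans; apply; apply: ltW.
Qed.

Lemma count_disjoint_le (T : eqType) (a b c : pred T) (s : seq T) :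
  {in s, forall x, a x -> ~~ b x} -> (forall x, a x || b x -> c x) ->
  (count a s + count b s <= count c s)%N.
Proof.
move=> ab abc; rewrite -count_predUI (@eq_in_count _ (predI a b) pred0).
  by rewrite count_pred0 addn0; apply: sub_count => x /abc.
by move=> x xs /=; have := ab x xs; case: (a x) => // /(_ isT) /negbTE.
Qed.

Lemma powR_inv_le (R : realType) (n : nat) (K y : R) :
  (0 < n)%N -> 0 <= K -> 0 <= y -> K <= y ^+ n -> K `^ n%:R^-1 <= y.
Proof.
move=> n0 K0 y0 K_le; have n_gt0 : (0 : R) < n%:R by rewrite ltr0n.
have inv_ge0 : (0 : R) <= n%:R^-1 by rewrite invr_ge0 ltW.
apply: le_trans (ge0_ler_powR inv_ge0 _ _ K_le) _; rewrite ?nnegrE ?exprn_ge0 //.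
by rewrite -powR_mulrn // -powRrM mulfV ?powRr1 // gt_eqF.
Qed.

Section EuclideanDistance.
Variables (R : realType) (d : nat).
Implicit Types (x y z : 'rV[R]_d) (a b : 'I_d -> R).

Lemma sumr_sqr_ge0 a : 0 <= \sum_i a i ^+ 2.
Proof. by apply: sumr_ge0 => i _; exact: sqr_ge0. Qed.

(* Lagrange's identity: the defect is half of \sum_(i, j) (a_i b_j - a_j b_i)^2. *)
Lemma sqr_sum_mul_le a b :
  (\sum_i a i * b i) ^+ 2 <= (\sum_i a i ^+ 2) * (\sum_i b i ^+ 2).
Proof.
have : 0 <= \sum_i \sum_j (a i * b j - a j * b i) ^+ 2.
  by apply: sumr_ge0 => i _; apply: sumr_ge0 => j _; exact: sqr_ge0.
suff -> : \sum_i \sum_j (a i * b j - a j * b i) ^+ 2 =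
    (\sum_i a i ^+ 2) * (\sum_i b i ^+ 2) + (\sum_i b i ^+ 2) * (\sum_i a i ^+ 2)
    - 2 * ((\sum_i a i * b i) * (\sum_i a i * b i)) by rewrite expr2; lra.
rewrite !mulr_suml mulr_sumr -big_split -sumrB; apply: eq_bigr => i _.
rewrite /= !mulr_sumr -big_split -sumrB; apply: eq_bigr => j _ /=; ring.
Qed.

Lemma sum_mul_le_sqrt a b :
  \sum_i a i * b i <= Num.sqrt (\sum_i a i ^+ 2) * Num.sqrt (\sum_i b i ^+ 2).
Proof.
rewrite -sqrtrM ?sumr_sqr_ge0 //; apply: le_trans (ler_norm _) _.
by rewrite -sqrtr_sqr ler_sqrt ?mulr_ge0 ?sumr_sqr_ge0 // sqr_sum_mul_le.
Qed.

Lemma eucl_distC x y : eucl_dist x y = eucl_dist y x.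
Proof. by congr Num.sqrt; apply: eq_bigr => i _; rewrite -sqrrN opprB. Qed.

Lemma sqrt_sum_sqrD_le a b :
  Num.sqrt (\sum_i (a i + b i) ^+ 2) <=
  Num.sqrt (\sum_i a i ^+ 2) + Num.sqrt (\sum_i b i ^+ 2).
Proof.
have -> : \sum_i (a i + b i) ^+ 2 =
    \sum_i a i ^+ 2 + \sum_i b i ^+ 2 + 2 * \sum_i a i * b i.
  by rewrite mulr_sumr -!big_split; apply: eq_bigr => i _ /=; ring.
rewrite -[_ + _ in X in _ <= X]ger0_norm ?addr_ge0 ?sqrtr_ge0 //.
rewrite -sqrtr_sqr ler_sqrt ?sqr_ge0 // sqrrD !sqr_sqrtr ?sumr_sqr_ge0 //.
have := sum_mul_le_sqrt a b; lra.
Qed.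

Lemma eucl_dist_triangle x y z : eucl_dist x z <= eucl_dist x y + eucl_dist y z.
Proof.
have := sqrt_sum_sqrD_le (fun i => x ord0 i - y ord0 i) (fun i => y ord0 i - z ord0 i).
by under eq_bigr do rewrite addrA subrK.
Qed.

Lemma coord_le_eucl_dist x y i : `|x ord0 i - y ord0 i| <= eucl_dist x y.
Proof.
rewrite /eucl_dist -sqrtr_sqr ler_sqrt ?sumr_sqr_ge0 //.
by rewrite (bigD1 i) //= lerDl; apply: sumr_ge0 => j _; exact: sqr_ge0.
Qed.

Lemma eucl_dist_le_coord x y (e : R) : 0 <= e ->
  (forall i, `|x ord0 i - y ord0 i| <= e) -> eucl_dist x y <= d%:R * e.
Proof.
move=> e0 xy_e; rewrite -[X in _ <= X]ger0_norm ?mulr_ge0 //.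
rewrite -sqrtr_sqr ler_sqrt ?sqr_ge0 //.
apply: (@le_trans _ _ (\sum_(i < d) e ^+ 2)).
  apply: ler_sum => i _; move: (x ord0 i - y ord0 i) (xy_e i) => t.
  by rewrite ler_norml => /andP[? ?]; nra.
rewrite sumr_const card_ord exprMn -[e ^+ 2 *+ d]mulr_natl ler_wpM2r ?sqr_ge0 //.
by rewrite -natrX ler_nat; case: (d) => // n; rewrite expnS leq_pmulr.
Qed.

End EuclideanDistance.

Section Packing.
Variables (R : realType) (d : nat).
Implicit Types (x p q : 'rV[R]_d).

Lemma floor_eq_dist_lt (s t : R) : Num.floor s = Num.floor t -> `|s - t| < 1.
Proof.
move=> st; have /andP[s1 s2] := floor_itv s; have /andP[t1 t2] := floor_itv t.
rewrite st intrD in s1 s2; rewrite intrD in t2.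
by rewrite ltr_norml; apply/andP; split; lra.
Qed.

Lemma floor_shift_bounds (t : R) (n : nat) : `|t| <= n%:R ->
  0 <= Num.floor t + n%:Z /\ (absz (Num.floor t + n%:Z)%R < n.*2.+1)%N.
Proof.
rewrite ler_norml => /andP[tl tu].
have fl : - n%:Z <= Num.floor t by rewrite floor_ge_int rmorphN.
have fu : Num.floor t <= n%:Z.
  by rewrite -(ler_int R); apply: le_trans (floor_le t) _.
split; lia.
Qed.

Definition grid_cell (e : R) (n : nat) x p : {ffun 'I_d -> 'I_n.*2.+1} :=
  [ffun i => inord (absz (Num.floor ((p ord0 i - x ord0 i) / e) + n%:Z))].

Lemma grid_cell_eq_dist e n x p q : 0 < e ->
  (forall i, `|(p ord0 i - x ord0 i) / e| <= n%:R) ->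
  (forall i, `|(q ord0 i - x ord0 i) / e| <= n%:R) ->
  grid_cell e n x p = grid_cell e n x q -> eucl_dist p q <= d%:R * e.
Proof.
move=> e0 pn qn pq; apply: eucl_dist_le_coord (ltW e0) _ => i.
have [p0 pb] := floor_shift_bounds (pn i); have [q0 qb] := floor_shift_bounds (qn i).
have := congr1 (fun f : {ffun _ -> _} => val (f i)) pq; rewrite /= !ffunE !inordK //.
move=> /(congr1 Posz); rewrite !gez0_abs // => /addIr /floor_eq_dist_lt.
rewrite -mulrBl opprB addrA subrK normrM [`|e^-1|]gtr0_norm ?invr_gt0 //.
by rewrite ltr_pdivrMr // mul1r => /ltW.
Qed.

Lemma packing_bound (delta r : R) x V : (0 < d)%N -> 0 < delta -> delta <= r ->
  delta_separated delta V -> (forall p, p \in V -> eucl_dist x p <= r) ->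
  (size V)%:R <= (7 * d%:R * (r / delta)) ^+ d.
Proof.
move=> d0 delta0 delta_r [uV sepV] Vx.
have d1 : 1 <= (d%:R : R) by rewrite ler1n.
(* Grid cells of side e have diameter at most d e = delta / 2, so the
   delta-separated points of V lie in distinct cells. *)
pose e := delta / (2 * d%:R).
have e0 : 0 < e by rewrite divr_gt0 // mulr_gt0 // ltr0n.
have re0 : 0 <= r / e by rewrite divr_ge0 ?ltW //; lra.
pose n := (Num.trunc (r / e)).+1.
have /andP[_ n_gt] := truncn_itv re0; have /andP[n_le _] := truncn_itv re0.
have Vn : forall p, p \in V -> forall i, `|(p ord0 i - x ord0 i) / e| <= n%:R.
  move=> p pV i; rewrite normrM [`|e^-1|]gtr0_norm ?invr_gt0 // ler_pdivrMr //.
  rewrite distrC; apply: le_trans (coord_le_eucl_dist _ _ _) _.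
  by apply: le_trans (Vx p pV) _; apply: ltW; rewrite -ltr_pdivrMr.
have inj : {in V &, injective (grid_cell e n x)}.
  move=> p q pV qV cell_pq; apply/eqP; apply: contraT => pq.
  have := sepV p q pV qV pq; have := grid_cell_eq_dist e0 (Vn p pV) (Vn q qV) cell_pq.
  have -> : d%:R * e = delta / 2 by rewrite /e; field; rewrite pnatr_eq0 -lt0n d0.
  lra.
have sizeV : (size V <= n.*2.+1 ^ d)%N.
  rewrite -(size_map (grid_cell e n x)) -(card_uniqP _) ?map_inj_in_uniq //.
  by apply: leq_trans (max_card _) _; rewrite card_ffun !card_ord.
apply: le_trans (_ : (n.*2.+1)%:R ^+ d <= _); first by rewrite -natrX ler_nat.
have rd : 1 <= d%:R * (r / delta).
  by rewrite mulr_ege1 // ler_pdivlMr // mul1r.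
rewrite -mulrA lerXn2r ?nnegrE ?ler0n //; first by lra.
have -> : (n.*2.+1 = 2 * Num.trunc (r / e) + 3)%N by rewrite /n; lia.
have re : r / e = 2 * (d%:R * (r / delta)).
  by rewrite /e; field; rewrite gt_eqF // pnatr_eq0 -lt0n d0.
rewrite natrD natrM; lra.
Qed.

End Packing.

Section SparseSubsequence.
Variables (R : realType) (d : nat) (delta : R).
Hypothesis delta_gt0 : 0 < delta.
Implicit Types (x y p q : 'rV[R]_d) (W S V P : seq 'rV[R]_d).

Lemma ball_boundN (M : R) S : ~ ball_bound delta M S ->
  exists r x, delta <= r /\ M * (r / delta) < (nball x r S)%:R.
Proof.
move=> notMS; apply: contrapT => none; apply: notMS => r x delta_r.
by rewrite leNgt; apply/negP => lt; apply: none; exists r, x.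
Qed.

Lemma ball_bound_nil (M : R) : 0 <= M -> ball_bound delta M ([::] : seq 'rV[R]_d).
Proof.
move=> M0 r x delta_r; rewrite /nball /= mulr_ge0 // divr_ge0 ?ltW //.
exact: lt_le_trans delta_gt0 delta_r.
Qed.

Fixpoint sparsify V : seq 'rV[R]_d :=
  if V is p :: V' then
    let S := sparsify V' in if `[< ball_bound delta 2 (p :: S) >] then p :: S else S
  else [::].

Lemma sparsify_subseq V : subseq (sparsify V) V.
Proof.
elim: V => [|p V IHV] //=; case: asboolP => _; first by rewrite eqxx.
exact: subseq_trans IHV (subseq_cons _ _).
Qed.

Lemma ball_bound_sparsify V : ball_bound delta 2 (sparsify V).
Proof. by elim: V => [|p V IHV] /=; [exact: ball_bound_nil | case: asboolP]. Qed.

Lemma sparsify_rejected V p : p \in V -> p \notin sparsify V ->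
  exists c s, [/\ delta <= s, eucl_dist c p <= s & s / delta <= (nball c s (sparsify V))%:R].
Proof.
elim: V => [|p' V IHV] //=; have [_ | notb] := asboolP (ball_bound delta 2 (p' :: _)).
  rewrite !inE negb_or => /orP[/eqP -> | pV] /andP[pp' pS]; first by rewrite eqxx in pp'.
  have [c [s [delta_s cp sS]]] := IHV pV pS.
  by exists c, s; split => //; apply: le_trans sS _; rewrite ler_nat /nball /=; lia.
rewrite inE => /orP[/eqP -> | pV] pS; last exact: IHV.
have [r [c [delta_r lt_r]]] := ball_boundN notb.
have := ball_bound_sparsify V c delta_r; move: lt_r; rewrite /nball /=.
have r1 : 1 <= r / delta by rewrite ler_pdivlMr // mul1r.
have [cp' | _] := boolP (eucl_dist c p' <= r); last by rewrite add0n; lra.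
by rewrite add1n -natr1 => lt_r S_r; exists c, r; split => //; lra.
Qed.

Lemma eucl_dist_le_triple_radius (c c' q p : 'rV[R]_d) (s s' : R) :
  eucl_dist c q <= s -> eucl_dist c' q <= s' -> eucl_dist c' p <= s' -> s' <= s ->
  eucl_dist c p <= 3 * s.
Proof.
have := eucl_dist_triangle c q p; have := eucl_dist_triangle q c' p.
rewrite (eucl_distC q c'); lra.
Qed.

Section Vitali.
Variables (M : R) (W S : seq 'rV[R]_d) (c : 'rV[R]_d -> 'rV[R]_d) (s : 'rV[R]_d -> R).
Hypotheses (M_ge0 : 0 <= M) (W_bound : ball_bound delta M W).

Let covered P q := has (fun p => eucl_dist (c p) q <= s p) P.

(* Vitali's argument: every point whose ball meets the largest ball B0 at a
   point of S lies in the triple of B0, which holds at most 3 M #(B0 & S)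
   points of W; the points whose balls miss B0 & S are counted by induction. *)
Lemma vitali_count P : uniq P -> {subset P <= W} ->
  (forall p, p \in P -> [/\ delta <= s p, eucl_dist (c p) p <= s p &
                          s p / delta <= (nball (c p) (s p) S)%:R]) ->
  (size P)%:R <= 3 * M * (count (covered P) S)%:R.
Proof.
have [n] := ubnP (size P); elim: n P => // n IHn P sizeP uP PW Pball.
have [-> | P_nil] := eqVneq P [::]; first by rewrite mulr_ge0 ?mulr_ge0.
have [p0 p0P p0_max] := exists_max_seq s P_nil.
have [delta_s0 _ S_s0] := Pball p0 p0P.
pose B0 q := eucl_dist (c p0) q <= s p0.
pose meets p := has (fun q => (eucl_dist (c p) q <= s p) && B0 q) S.
pose P2 := [seq p <- P | ~~ meets p].
have meets_p0 : meets p0.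
  have : (0 < count B0 S)%N.
    by rewrite -(ltr_nat R); apply: lt_le_trans S_s0; rewrite divr_gt0 // (lt_le_trans delta_gt0).
  by rewrite -has_count => /hasP[q qS B0q]; apply/hasP; exists q => //; apply/andP.
have meets_le : (count meets P)%:R <= 3 * M * (count B0 S)%:R.
  apply: (@le_trans _ _ (nball (c p0) (3 * s p0) W)%:R).
    rewrite ler_nat /nball -!size_filter; apply: uniq_leq_size => [|p]; first exact: filter_uniq.
    rewrite !mem_filter => /andP[/hasP[q qS /andP[cq B0q]] pP].
    have [_ cp _] := Pball p pP.
    by rewrite PW // andbT (eucl_dist_le_triple_radius B0q cq cp) ?p0_max.
  apply: le_trans (W_bound _ _) _; first by have := delta_gt0; lra.
  have -> : M * (3 * s p0 / delta) = 3 * M * (s p0 / delta) by ring.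
  by apply: ler_wpM2l; rewrite ?mulr_ge0.
have sizeP2 : size P = (count meets P + size P2)%N by rewrite size_filter count_predC.
have P2_le : (size P2)%:R <= 3 * M * (count (covered P2) S)%:R.
  apply: IHn; rewrite ?filter_uniq //.
  - have : (0 < count meets P)%N by rewrite -has_count; apply/hasP; exists p0.
    by move: sizeP; rewrite sizeP2; lia.
  - by move=> p; rewrite mem_filter => /andP[_ /PW].
  - by move=> p; rewrite mem_filter => /andP[_ /Pball].
have cover_le : (count B0 S + count (covered P2) S <= count (covered P) S)%N.
  apply: count_disjoint_le => [q qS B0q | q].
    apply/hasP => -[p]; rewrite mem_filter => /andP[/negP notmeets _] cq.
    by apply: notmeets; apply/hasP; exists q; rewrite ?cq.
  move=> /orP[B0q | /hasP[p pP2 cq]]; apply/hasP; first by exists p0.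
  by exists p; move: pP2; rewrite mem_filter => /andP[].
rewrite sizeP2 natrD; apply: le_trans (lerD meets_le P2_le) _.
by rewrite -mulrDr -natrD ler_wpM2l ?mulr_ge0 // ler_nat.
Qed.

End Vitali.

End SparseSubsequence.

Section Decomposition.
Variables (R : realType) (d : nat) (delta : R).
Hypothesis delta_gt0 : 0 < delta.
Implicit Types (x y p : 'rV[R]_d) (W V : seq 'rV[R]_d).

Lemma delta_separated_filter (a : pred 'rV[R]_d) W :
  delta_separated delta W -> delta_separated delta [seq p <- W | a p].
Proof.
move=> [uW sepW]; split; first exact: filter_uniq.
by move=> p q; rewrite !mem_filter => /andP[_ pW] /andP[_ qW]; apply: sepW.
Qed.

Lemma sparsify_size_ge (M r : R) W V : 1 <= M -> ball_bound delta M W ->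
  uniq V -> {subset V <= W} -> M * (r / delta) <= 2 * (size V)%:R ->
  r / delta <= 8 * (size (sparsify delta V))%:R.
Proof.
move=> M1 MW uV VW dense; set S := sparsify delta V.
pose P := [seq p <- V | p \notin S].
have witness : forall p, exists w : 'rV[R]_d * R, p \in P ->
    [/\ delta <= w.2, eucl_dist w.1 p <= w.2 & w.2 / delta <= (nball w.1 w.2 S)%:R].
  move=> p; have [pP | _] := boolP (p \in P); last by exists (p, delta).
  move: pP; rewrite mem_filter => /andP[pS pV].
  by have [c [s]] := sparsify_rejected delta_gt0 pV pS; exists (c, s).
have [w Pw] := choice witness.
have P_le : (size P)%:R <= 3 * M * (size S)%:R.
  apply: le_trans (vitali_count delta_gt0 _ MW _ _ Pw) _; rewrite ?filter_uniq //; first lra.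
    by move=> p; rewrite mem_filter => /andP[_ /VW].
  by apply: ler_wpM2l; rewrite ?ler_nat ?count_size //; lra.
have V_le : (size V <= size S + size P)%N.
  rewrite size_filter -(count_predC (mem S) V) leq_add2r -size_filter.
  by apply: uniq_leq_size => [|p]; rewrite ?filter_uniq // mem_filter => /andP[].
have S_ge0 : (0 : R) <= (size S)%:R by [].
rewrite -(ler_nat R) natrD in V_le; nra.
Qed.

Lemma exists_dense_ball (K : R) W : 0 <= K -> ~ ball_bound delta K W ->
  exists M x r, [/\ ball_bound delta M W, delta <= r,
    K * (r / delta) < (nball x r W)%:R & M * (r / delta) <= 2 * (nball x r W)%:R].
Proof.
move=> K0 notKW; have [r0 [x0 [delta_r0 dense0]]] := ball_boundN notKW.
have rdelta_gt0 r : delta <= r -> 0 < r / delta.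
  by move=> delta_r; rewrite divr_gt0 //; have := delta_gt0; lra.
pose density x r := (nball x r W)%:R / (r / delta).
have densityE x r : delta <= r -> (nball x r W)%:R = density x r * (r / delta).
  by move=> delta_r; rewrite divfK // gt_eqF // rdelta_gt0.
(* M is the supremum of the ball densities; the chosen ball has density above (M + K) / 2. *)
pose E : set R := fun t => exists x r, delta <= r /\ t = density x r.
have E_sup : has_sup E.
  split; first by exists (density x0 r0), x0, r0.
  exists (size W)%:R => _ [x [r [delta_r ->]]].
  rewrite ler_pdivrMr ?rdelta_gt0 //; apply: le_trans (_ : (size W)%:R <= _).
    by rewrite ler_nat count_size.
  by rewrite ler_peMr // ler_pdivlMr // mul1r.
set M := sup E.
have density_le x r : delta <= r -> density x r <= M.
  by move=> delta_r; apply: sup_upper_bound => //; exists x, r.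
have KM : K < M.
  apply: lt_le_trans (density_le x0 r0 delta_r0).
  by rewrite -(ltr_pM2r (rdelta_gt0 _ delta_r0)) -densityE.
have eps_gt0 : 0 < (M - K) / 2 by apply: divr_gt0 => //; lra.
have [_ [x [r [delta_r ->]]] close] := sup_adherent eps_gt0 E_sup; rewrite -/M in close.
exists M, x, r; split => //.
- by move=> y s delta_s; rewrite densityE // ler_pM2r ?rdelta_gt0 // density_le.
- by rewrite densityE // ltr_pM2r ?rdelta_gt0 //; lra.
- by rewrite densityE // [2 * _]mulrA ler_pM2r ?rdelta_gt0 //; lra.
Qed.

Lemma dense_ball_radius_ge (K r : R) W x : (0 < d)%N -> 0 <= K ->
  delta_separated delta W -> delta <= r -> K * (r / delta) < (nball x r W)%:R ->
  (7 * d%:R)^-1 * delta * K `^ d%:R^-1 <= r.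
Proof.
move=> d0 K0 sepW delta_r dense.
have d_gt0 : (0 : R) < 7 * d%:R by rewrite mulr_gt0 ?ltr0n.
have rdelta_ge1 : 1 <= r / delta by rewrite ler_pdivlMr // mul1r.
have K_le : K <= (7 * d%:R * (r / delta)) ^+ d.
  apply: le_trans (_ : (nball x r W)%:R <= _).
    by apply: ltW; apply: le_lt_trans dense; rewrite ler_peMr.
  rewrite /nball -size_filter; apply: (packing_bound (x := x)) => //.
    exact: delta_separated_filter.
  by move=> p; rewrite mem_filter => /andP[xp _].
have prod_ge0 : 0 <= 7 * d%:R * (r / delta).
  by rewrite mulr_ge0 ?ltW // divr_gt0 //; have := delta_gt0; lra.
apply: le_trans (ler_wpM2l _ (powR_inv_le d0 K0 prod_ge0 K_le)) _.
  by rewrite mulr_ge0 ?invr_ge0 ?ltW.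
suff -> : (7 * d%:R)^-1 * delta * (7 * d%:R * (r / delta)) = r by [].
by field; rewrite !gt_eqF // ltr0n.
Qed.

Definition cluster (K : R) (Z : seq 'rV[R]_d) :=
  exists (r : R) (c : 'rV[R]_d) (Z' : seq 'rV[R]_d),
    [/\ (7 * d%:R)^-1 * delta * K `^ (d%:R^-1) <= r,
        (forall z, z \in Z -> eucl_dist c z <= r),
        subseq Z' Z,
        8^-1 * (r / delta) <= (size Z')%:R /\ (size Z')%:R <= 2 * (r / delta)
      & ball_bound delta 2 Z'].

Lemma cluster_dense_ball (K M r : R) W x : (0 < d)%N -> 1 <= K ->
  delta_separated delta W -> ball_bound delta M W -> delta <= r ->
  K * (r / delta) < (nball x r W)%:R -> M * (r / delta) <= 2 * (nball x r W)%:R ->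
  cluster K [seq y <- W | eucl_dist x y <= r].
Proof.
move=> d0 K1 sepW MW delta_r dense_K dense_M.
set V := [seq y <- W | _]; have sizeV : size V = nball x r W by rewrite size_filter.
have Vx p : p \in V -> eucl_dist x p <= r by rewrite mem_filter => /andP[].
have rdelta_gt0 : 0 < r / delta by rewrite divr_gt0 //; have := delta_gt0; lra.
have M1 : 1 <= M.
  have := lt_le_trans dense_K (MW r x delta_r); rewrite ltr_pM2r //; lra.
exists r, x, (sparsify delta V); split => //.
- by apply: dense_ball_radius_ge dense_K => //; lra.
- exact: sparsify_subseq.
- split.
    rewrite ler_pdivrMl //; apply: (sparsify_size_ge M1 MW).
    + exact: filter_uniq sepW.1.
    + by move=> p; rewrite mem_filter => /andP[].
    + by rewrite sizeV.
  have := ball_bound_sparsify delta_gt0 V x delta_r.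
  rewrite /nball (@eq_in_count _ _ predT) ?count_predT // => p pS.
  exact/Vx/(mem_subseq (sparsify_subseq delta V)).
- exact: ball_bound_sparsify delta_gt0 V.
Qed.

Lemma cluster_decomposition (K : R) W : (0 < d)%N -> 1 <= K -> delta_separated delta W ->
  exists Y Z, [/\ perm_eq W (Y ++ flatten Z), ball_bound delta K Y &
                  forall Zi, Zi \in Z -> cluster K Zi].
Proof.
move=> d0 K1; have [n] := ubnP (size W); elim: n W => // n IHn W sizeW sepW.
have [KW | notKW] := asboolP (ball_bound delta K W).
  by exists W, [::]; rewrite cats0.
have [M [x [r [MW delta_r dense_K dense_M]]]] := exists_dense_ball (le_trans ler01 K1) notKW.
pose inball y := eucl_dist x y <= r.
have sizeW' : (size [seq y <- W | ~~ inball y] < n)%N.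
  have : (0 < nball x r W)%N.
    rewrite -(ltr_nat R); apply: le_lt_trans dense_K.
    by rewrite mulr_ge0 ?divr_ge0 //; have := delta_gt0; lra.
  have : (nball x r W + size [seq y <- W | ~~ inball y] = size W)%N.
    by rewrite size_filter count_predC.
  lia.
have [Y [Z [W'YZ YK Zcl]]] := IHn _ sizeW' (delta_separated_filter _ sepW).
exists Y, ([seq y <- W | inball y] :: Z); split => //.
  by rewrite -(perm_filterC inball W) perm_sym /= perm_catCA perm_cat2l perm_sym.
move=> Zi; rewrite inE => /predU1P[-> | /Zcl //].
exact: cluster_dense_ball MW delta_r dense_K dense_M.
Qed.

End Decomposition.

Theorem lemma3p2 (R : realType) :
  exists Cexp : R, 0 <= Cexp /\
  forall d : nat, (0 < d)%N ->
  exists c1 c2 C2 C3 : R, [/\ 0 < c1, 0 < c2, 0 < C2 & 0 < C3] /\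
  forall (delta : R) (X : seq 'rV[R]_d) (K : R),
    0 < delta -> delta < 1 -> delta_separated delta X -> 1 <= K ->
    exists (Y : seq 'rV[R]_d) (Z : seq (seq 'rV[R]_d)),
      perm_eq X (Y ++ flatten Z) /\
      ball_bound delta K Y /\
      (forall Zi, Zi \in Z ->
         exists (ri : R) (ci : 'rV[R]_d) (Zi' : seq 'rV[R]_d),
           [/\ c1 * delta * K `^ (d%:R^-1) <= ri,
               (forall z, z \in Zi -> eucl_dist ci z <= ri),
               subseq Zi' Zi,
               c2 * (ri / delta) <= (size Zi')%:R /\
                 (size Zi')%:R <= C2 * (ri / delta)
             & ball_bound delta (C3 * `|ln delta| `^ Cexp) Zi']).
Proof.
(* No logarithmic loss is needed: with Cexp = 0 the sets Zi' are 2-sparse. *)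
exists 0; split => // d d0.
exists (7 * d%:R)^-1, 8^-1, 2, 2; split.
  by split; rewrite ?invr_gt0 ?mulr_gt0 ?ltr0n.
move=> delta X K delta0 _ sepX K1; rewrite powRr0 mulr1.
have [Y [Z [XYZ YK Zcl]]] := cluster_decomposition delta0 d0 K1 sepX.
by exists Y, Z.
Qed.
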